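(* Let $n>3$ be an integer. The inverse of the circulant matrix $\mathrm{circ}(3,-1,0,\ldots,0,-1)$ of order $n$ is \[[\mathrm{circ}(3,-1,0,\ldots,0,-1)]^{-1}=\mathrm{circ}(a_0,a_1,\ldots,a_{n-1}),\] where for $j=0,1,\ldots,n-1$, \[a_j=\frac{2^{n-j}}{\sqrt{5}}\left[\frac{(3-\sqrt{5})^j}{2^n-(3-\sqrt{5})^n}-\frac{(3+\sqrt{5})^j}{2^n-(3+\sqrt{5})^n}\right].\]
   Context: For $c_0,\dots,c_{k-1}$, $\mathrm{circ}(c_0,\ldots,c_{k-1})$ denotes the $k\times k$ circulant matrix whose $(i,j)$-entry is $c_{(j-i)\bmod k}$ (first row $c_0,\dots,c_{k-1}$, each subsequent row the cyclic right shift of the previous one). *)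

From mathcomp Require Import all_boot all_order all_algebra.
Set Implicit Arguments. Unset Strict Implicit. Unset Printing Implicit Defensive.
Import Order.TTheory GRing.Theory Num.Theory.
Local Open Scope ring_scope.

Definition circ (R : Type) (k : nat) (c : nat -> R) : 'M[R]_k :=
  \matrix_(i < k, j < k) c ((j + k - i) %% k)%N.

Definition circ_row (R : nzRingType) (n : nat) (j : nat) : R :=
  if j == 0%N then 3
  else if (j == 1%N) || (j == n.-1) then -1 else 0.

Definition a_coef (R : rcfType) (n j : nat) : R :=
  let s5 := Num.sqrt (5 : R) in
  (2 ^+ (n - j))%R / s5 *
  ((3 - s5) ^+ j / (2 ^+ n - (3 - s5) ^+ n)
   - (3 + s5) ^+ j / (2 ^+ n - (3 + s5) ^+ n)).

(* Multiplying by circ(3,-1,0,...,0,-1) turns the first row a of a circulant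
   into its cyclic second difference 3 a_d - a_(d-1) - a_(d+1), so it suffices
   that this difference of the paper's a is the unit vector at 0.  For a root x
   of X^2 - 3X + 1, g_x(j) = x^j / (1 - x^n) obeys g(j+2) = 3 g(j+1) - g(j) and
   wraps around as g(n) = g(0) - 1.  With alpha = (3 - sqrt 5)/2 and
   beta = (3 + sqrt 5)/2, b = (g_alpha - g_beta) / (beta - alpha) thus
   satisfies the recurrence together with b(n) = b(0) and b(n+1) = b(1) + 1,
   which is exactly the required identity; a_j = b_j once the powers of 2
   cancel. *)

From mathcomp Require Import all_boot all_order all_algebra.
From mathcomp Require Import ring lra zify.
Set Implicit Arguments. Unset Strict Implicit. Unset Printing Implicit Defensive.
Import Order.TTheory GRing.Theory Num.Theory.
Local Open Scope ring_scope.

Definition circ_conv (R : nzRingType) (n : nat) (c e : nat -> R) (d : nat) : R :=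
  \sum_(k < n) c k * e ((d + n - k) %% n)%N.

Lemma ord_subE (N : nat) (i j : 'I_N.+1) : ((j + N.+1 - i) %% N.+1)%N = (j - i)%R :> nat.
Proof. by rewrite /= modnDmr addnBA // ltnW. Qed.

Lemma circ_ordE (R : Type) (N : nat) (c : nat -> R) (i j : 'I_N.+1) :
  circ N.+1 c i j = c (j - i)%R.
Proof. by rewrite mxE ord_subE. Qed.

Lemma eq_circ (R : Type) (n : nat) (c e : nat -> R) :
  (forall d, (d < n)%N -> c d = e d) -> circ n c = circ n e.
Proof.
move=> ce; apply/matrixP => i j; rewrite !mxE ce // ltn_pmod //.
exact: leq_ltn_trans (ltn_ord i).
Qed.

Lemma circ_delta (R : nzRingType) (n : nat) :
  circ n (fun d => (d == 0)%:R) = 1%:M :> 'M[R]_n.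
Proof.
case: n => [|N]; first by apply/matrixP => -[].
apply/matrixP => i j; rewrite circ_ordE mxE.
by have -> : (nat_of_ord (j - i)%R == 0%N) = (i == j) by rewrite [i == j]eq_sym -subr_eq0.
Qed.

Lemma circ_mul (R : nzRingType) (n : nat) (c e : nat -> R) :
  circ n c *m circ n e = circ n (circ_conv n c e).
Proof.
case: n => [|N]; first by apply/matrixP => -[].
apply/matrixP => i j; rewrite circ_ordE mxE /circ_conv (reindex_inj (addrI i)).
apply: eq_bigr => k _; rewrite !circ_ordE ord_subE.
by rewrite [(i + k)%R]addrC addrK opprD addrA addrAC.
Qed.

Lemma circ_row_conv (R : nzRingType) (n : nat) (e : nat -> R) (d : nat) :
  (2 < n)%N -> (d < n)%N ->
  circ_conv n (circ_row R n) e d = 3 * e d - e ((d + n - 1) %% n)%N - e ((d + 1) %% n)%N.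
Proof.
case: n => [|[|[|m]]] // _ ltdn.
rewrite /circ_conv big_ord_recl big_ord_recl big_ord_recr /= big1 => [|k _].
  rewrite /circ_row /bump /= !add1n eqxx subn0 modnDr modn_small //.
  have -> : (d + m.+3 - m.+2 = d + 1)%N by lia.
  by rewrite add0r !mulN1r addrA.
have := ltn_ord k; rewrite /circ_row /bump !leq0n !add1n => ltkm.
by rewrite ifF ?ifF ?mul0r //; lia.
Qed.

Lemma cyclic_second_difference (R : nzRingType) (t : R) (n : nat) (b : nat -> R) :
  (1 < n)%N -> (forall j, b j.+2 = t * b j.+1 - b j) ->
  b n = b 0 -> b n.+1 = b 1 + 1 ->
  forall d, (d < n)%N ->
  t * b d - b ((d + n - 1) %% n)%N - b ((d + 1) %% n)%N = (d == 0)%:R.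
Proof.
case: n => [|[|m]] // _ b_rec b_n b_Sn [|d] ltdn.
- rewrite add0n subn1 /= !modn_small //.
  by rewrite -b_n add0n -b_rec b_Sn addrAC subrr add0r.
have -> : ((d.+1 + m.+2 - 1) %% m.+2 = d)%N.
  have -> : (d.+1 + m.+2 - 1 = d + m.+2)%N by lia.
  by rewrite modnDr modn_small //; lia.
case: (ltngtP d m) => [ltdm | ltmd | ->].
- by rewrite addn1 modn_small ?b_rec ?subrr.
- lia.
- by rewrite addn1 modnn -b_n b_rec subrr.
Qed.

Definition cyclic_geo (F : fieldType) (x : F) (n j : nat) : F := x ^+ j / (1 - x ^+ n).

Section CyclicGeo.
Variables (F : fieldType) (x : F) (n : nat).

Lemma cyclic_geoS j : cyclic_geo x n j.+1 = x * cyclic_geo x n j.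
Proof. by rewrite /cyclic_geo exprS mulrA. Qed.

Lemma cyclic_geo_rec (t : F) j : x ^+ 2 = t * x - 1 ->
  cyclic_geo x n j.+2 = t * cyclic_geo x n j.+1 - cyclic_geo x n j.
Proof. by move=> x_root; rewrite /cyclic_geo -addn2 exprD x_root exprS; ring. Qed.

Lemma cyclic_geo_wrap : x ^+ n != 1 -> cyclic_geo x n n = cyclic_geo x n 0 - 1.
Proof. by move=> xn1; rewrite /cyclic_geo expr0; field; rewrite subr_eq0 eq_sym. Qed.

Lemma cyclic_geo_scale (c : F) j : c != 0 -> (j <= n)%N ->
  c ^+ (n - j) * ((c * x) ^+ j / (c ^+ n - (c * x) ^+ n)) = cyclic_geo x n j.
Proof.
move=> c0 le_jn; rewrite /cyclic_geo.
have -> : c ^+ n - (c * x) ^+ n = c ^+ (n - j) * c ^+ j * (1 - x ^+ n).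
  by rewrite -exprD subnK // exprMn; ring.
transitivity (c ^+ (n - j) / c ^+ (n - j) * (c ^+ j / c ^+ j) * (x ^+ j / (1 - x ^+ n))).
  by rewrite exprMn !invfM; ring.
by rewrite !divff ?expf_neq0 // !mul1r.
Qed.

End CyclicGeo.

Definition circ_inv_coef (F : fieldType) (a b : F) (n j : nat) : F :=
  (cyclic_geo a n j - cyclic_geo b n j) / (b - a).

Section CircInvCoef.
Variables (F : fieldType) (t a b : F) (n : nat).
Hypotheses (a_root : a ^+ 2 = t * a - 1) (b_root : b ^+ 2 = t * b - 1).
Hypotheses (an1 : a ^+ n != 1) (bn1 : b ^+ n != 1) (ab : a != b).

Lemma circ_inv_coef_rec j :
  circ_inv_coef a b n j.+2 = t * circ_inv_coef a b n j.+1 - circ_inv_coef a b n j.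
Proof. by rewrite /circ_inv_coef !(cyclic_geo_rec _ _ a_root, cyclic_geo_rec _ _ b_root); ring. Qed.

Lemma circ_inv_coef_wrap : circ_inv_coef a b n n = circ_inv_coef a b n 0.
Proof. by rewrite /circ_inv_coef !cyclic_geo_wrap //; ring. Qed.

Lemma circ_inv_coef_wrapS : circ_inv_coef a b n n.+1 = circ_inv_coef a b n 1 + 1.
Proof.
rewrite /circ_inv_coef !cyclic_geoS !cyclic_geo_wrap //.
by field; rewrite subr_eq0 eq_sym.
Qed.

End CircInvCoef.

Section GoldenRoots.
Variable R : rcfType.

Definition alpha : R := (3 - Num.sqrt 5) / 2.
Definition beta : R := (3 + Num.sqrt 5) / 2.

Lemma sqrt5_sqr : Num.sqrt (5 : R) ^+ 2 = 5.
Proof. by rewrite sqr_sqrtr // ler0n. Qed.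

Lemma sqrt5_bounds : 1 < Num.sqrt (5 : R) < 3.
Proof.
have := sqrt5_sqr; have := sqrtr_ge0 (5 : R); rewrite expr2 => s5_ge0 s5_sq.
by apply/andP; split; nra.
Qed.

Lemma root_sqrt5 (s : R) : s ^+ 2 = 5 -> ((3 + s) / 2) ^+ 2 = 3 * ((3 + s) / 2) - 1.
Proof.
move=> s_sq; apply/eqP; rewrite -subr_eq0.
have -> : ((3 + s) / 2) ^+ 2 - (3 * ((3 + s) / 2) - 1) = (s ^+ 2 - 5) / 4 by field.
by rewrite s_sq subrr mul0r.
Qed.

Lemma alpha_root : alpha ^+ 2 = 3 * alpha - 1.
Proof.
by rewrite /alpha -[3 - _]/(3 + - Num.sqrt 5) root_sqrt5 // sqrrN sqrt5_sqr.
Qed.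

Lemma beta_root : beta ^+ 2 = 3 * beta - 1.
Proof. exact: root_sqrt5 sqrt5_sqr. Qed.

Lemma beta_sub_alpha : beta - alpha = Num.sqrt 5.
Proof. by rewrite /alpha /beta; field. Qed.

Lemma alpha_expn_neq1 n : (0 < n)%N -> alpha ^+ n != 1.
Proof.
move=> n_gt0; have /andP [s5_gt1 s5_lt3] := sqrt5_bounds.
have a_ge0 : 0 <= alpha by rewrite /alpha; lra.
have a_lt1 : alpha < 1 by rewrite /alpha; lra.
by rewrite lt_eqF // exprn_ilt1 // -lt0n.
Qed.

Lemma beta_expn_neq1 n : (0 < n)%N -> beta ^+ n != 1.
Proof.
move=> n_gt0; have /andP [s5_gt1 _] := sqrt5_bounds.
have b_gt1 : 1 < beta by rewrite /beta; lra.
by rewrite gt_eqF // exprn_egt1 // -lt0n.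
Qed.

Lemma alpha_neq_beta : alpha != beta.
Proof. by have /andP [s5_gt1 _] := sqrt5_bounds; rewrite lt_eqF // /alpha /beta; lra. Qed.

(* [j <= n] is needed because of the truncated subtraction in [2 ^+ (n - j)]. *)
Lemma a_coefE n j : (j <= n)%N -> a_coef R n j = circ_inv_coef alpha beta n j.
Proof.
move=> le_jn; rewrite /a_coef /circ_inv_coef beta_sub_alpha.
have two_neq0 : (2 : R) != 0 by rewrite pnatr_eq0.
have -> : 3 - Num.sqrt (5 : R) = 2 * alpha by rewrite /alpha mulrC divfK.
have -> : 3 + Num.sqrt (5 : R) = 2 * beta by rewrite /beta mulrC divfK.
by rewrite -!(cyclic_geo_scale _ two_neq0 le_jn); ring.
Qed.

Lemma a_coef_second_difference n d : (1 < n)%N -> (d < n)%N ->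
  3 * a_coef R n d - a_coef R n ((d + n - 1) %% n) - a_coef R n ((d + 1) %% n)
  = (d == 0)%:R.
Proof.
move=> n_gt1 ltdn; have n_gt0 := ltnW n_gt1.
have mod_le k : (k %% n <= n)%N by rewrite ltnW ?ltn_pmod.
rewrite !a_coefE ?mod_le ?(ltnW ltdn) //.
apply: cyclic_second_difference => //.
- exact: circ_inv_coef_rec alpha_root beta_root.
- exact: circ_inv_coef_wrap (alpha_expn_neq1 n_gt0) (beta_expn_neq1 n_gt0).
- exact: circ_inv_coef_wrapS (alpha_expn_neq1 n_gt0) (beta_expn_neq1 n_gt0) alpha_neq_beta.
Qed.

End GoldenRoots.

Theorem mainTheorem7 (R : rcfType) (n : nat) (hn : (3 < n)%N) :
  circ n (circ_row R n) \in unitmx /\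
  invmx (circ n (circ_row R n)) = circ n (a_coef R n).
Proof.
have CA : circ n (circ_row R n) *m circ n (a_coef R n) = 1%:M.
  rewrite circ_mul -circ_delta; apply: eq_circ => d ltdn.
  by rewrite circ_row_conv ?a_coef_second_difference // ?(ltn_trans _ hn).
have [CU _] := mulmx1_unit CA.
by split; last by rewrite -[invmx _]mulmx1 -CA mulKmx.
Qed.
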